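(* Let $n\ge1$, $a\in\mathcal{IS}_n$, and consider the semigroup $(\mathcal{IS}_n,*_a)$. Let $x\in\mathcal{IS}_n$. If $\operatorname{ran}(x)\subseteq\operatorname{dom}(a)$ and $\operatorname{dom}(x)\subseteq\operatorname{ran}(a)$, then the $\mathcal{H}$-class of $x$ is $$H_x=\{y\in\mathcal{IS}_n : \operatorname{dom}(y)=\operatorname{dom}(x),\ \operatorname{ran}(y)=\operatorname{ran}(x)\};$$ otherwise $H_x=\{x\}$.
   Context: $\mathcal{IS}_n$ is the set of all partial injective maps of $N=\{1,\dots,n\}$, including the empty map; $\operatorname{dom}(x)$, $\operatorname{ran}(x)$ denote domain and range. Maps are composed from left to right: $(xy)(i)=y(x(i))$, defined exactly when $i\in\operatorname{dom}(x)$ and $x(i)\in\operatorname{dom}(y)$. For fixed $a\in\mathcal{IS}_n$, $x*_a y:=xay$. Green's relations in a semigroup $S$: with $S^1$ the semigroup $S$ with an identity adjoined, $x\mathcal{L}y$ iff $S^1x=S^1y$, $x\mathcal{R}y$ iff $xS^1=yS^1$, $\mathcal{H}=\mathcal{L}\cap\mathcal{R}$, $\mathcal{D}=\mathcal{L}\circ\mathcal{R}$ (which equals $\mathcal{R}\circ\mathcal{L}$). $L_x,R_x,H_x,D_x$ denote the corresponding classes of $x$, here computed in $(\mathcal{IS}_n,*_a)$. *)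

From mathcomp Require Import all_boot.
Set Implicit Arguments. Unset Strict Implicit. Unset Printing Implicit Defensive.

(* Partial maps of N = {0,...,n-1} (i.e. 'I_n, standing for {1,...,n}):
   x i = Some j means i is in dom(x) and x(i) = j; None means undefined. *)
Definition ptmap (n : nat) := {ffun 'I_n -> option 'I_n}.

Definition pinj n (x : ptmap n) : Prop :=
  forall i j k, x i = Some k -> x j = Some k -> i = j.

Definition pdom n (x : ptmap n) : {set 'I_n} := [set i | x i != None].
Definition pran n (x : ptmap n) : {set 'I_n} := [set j | [exists i, x i == Some j]].

(* composition from left to right: (xy)(i) = y(x(i)) *)
Definition pcomp n (x y : ptmap n) : ptmap n := [ffun i => obind y (x i)].

Definition sandw n (a x y : ptmap n) : ptmap n := pcomp (pcomp x a) y.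

(* membership in S^1 x and x S^1 for S = (IS_n, *_a) *)
Definition inS1l n (a x z : ptmap n) : Prop :=
  z = x \/ exists s, pinj s /\ z = sandw a s x.
Definition inS1r n (a x z : ptmap n) : Prop :=
  z = x \/ exists s, pinj s /\ z = sandw a x s.

Definition greenL n (a x y : ptmap n) : Prop :=
  forall z, pinj z -> (inS1l a x z <-> inS1l a y z).
Definition greenR n (a x y : ptmap n) : Prop :=
  forall z, pinj z -> (inS1r a x z <-> inS1r a y z).
Definition greenH n (a x y : ptmap n) : Prop := greenL a x y /\ greenR a x y.

Definition inHclass n (a x y : ptmap n) : Prop := pinj y /\ greenH a x y.

From Pilot Require Import Defs.
From mathcomp Require Import all_boot.
Set Implicit Arguments. Unset Strict Implicit. Unset Printing Implicit Defensive.

(* Since s a y has range inside ran y and x a s has domain inside dom x,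
   L-related maps share their range and R-related maps their domain.
   Conversely, when dom x is inside ran a every z with ran z inside ran x
   factors as (z x^-1 a^-1) a x, and when ran x is inside dom a every
   injective z with dom z inside dom x factors as x a (a^-1 x^-1 z); this
   gives the H-class in the first case.  Otherwise x = x a u (if ran x is
   not inside dom a) or x = u a x (if dom x is not inside ran a) is
   impossible, while any y other than x that is R-related (resp. L-related)
   to x would produce such an identity. *)

Definition pinv n (f : ptmap n) : ptmap n := [ffun j => [pick i | f i == Some j]].

Lemma pinvP n (f : ptmap n) (i j : 'I_n) : pinv f j = Some i -> f i = Some j.
Proof. by rewrite ffunE; case: pickP => // k /eqP fk [<-]. Qed.

Lemma inranP n (f : ptmap n) (j : 'I_n) :
  reflect (exists i, f i = Some j) (j \in pran f).
Proof.
by rewrite inE; apply: (iffP existsP) => -[i fi]; exists i; apply/eqP.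
Qed.

Lemma pinv_pran n (f : ptmap n) (j : 'I_n) :
  j \in pran f -> exists i, pinv f j = Some i.
Proof.
move=> /inranP[i fi]; rewrite ffunE; case: pickP => [k _|/(_ i)]; first by exists k.
by rewrite fi eqxx.
Qed.

Lemma pinj_pinv n (f : ptmap n) : pinj (pinv f).
Proof. by move=> i j k /pinvP fi /pinvP; rewrite fi => -[]. Qed.

Lemma pinj_pcomp n (x y : ptmap n) : pinj x -> pinj y -> pinj (Defs.pcomp x y).
Proof.
move=> injx injy i j k; rewrite !ffunE.
case xi: (x i) => [p|] //=; case xj: (x j) => [q|] //= yp yq.
by move: xi; rewrite (injy _ _ _ yp yq) => /injx; apply.
Qed.

Lemma sandwE n (a x y : ptmap n) (i : 'I_n) :
  sandw a x y i = obind y (obind a (x i)).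
Proof. by rewrite !ffunE. Qed.

Lemma sandwA n (a x y z : ptmap n) :
  sandw a (sandw a x y) z = sandw a x (sandw a y z).
Proof.
apply/ffunP => i; rewrite !sandwE.
by case: (x i) => //= j; case: (a j) => //= k; rewrite sandwE.
Qed.

Lemma pran_sandw n (a s x : ptmap n) : pran (sandw a s x) \subset pran x.
Proof.
apply/subsetP => j /inranP[i]; rewrite sandwE.
by case: (s i) => //= p; case: (a p) => //= q xq; apply/inranP; exists q.
Qed.

Lemma pdom_sandw n (a x s : ptmap n) : pdom (sandw a x s) \subset pdom x.
Proof. by apply/subsetP => i; rewrite !inE sandwE; case: (x i). Qed.

Section Divisibility.

Variables (n : nat) (a : ptmap n).

Lemma inS1l_pran x z : inS1l a x z -> pran z \subset pran x.
Proof. by case=> [->|[s [_ ->]]]; [apply: subxx | apply: pran_sandw]. Qed.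

Lemma inS1r_pdom x z : inS1r a x z -> pdom z \subset pdom x.
Proof. by case=> [->|[s [_ ->]]]; [apply: subxx | apply: pdom_sandw]. Qed.

Lemma inS1lP x z : pdom x \subset pran a -> pinj z ->
  inS1l a x z <-> pran z \subset pran x.
Proof.
move=> domx injz; split; first exact: inS1l_pran.
move=> ranz; right; exists (Defs.pcomp z (Defs.pcomp (pinv x) (pinv a))); split.
  by apply: pinj_pcomp => //; apply: pinj_pcomp; apply: pinj_pinv.
apply/ffunP => i; rewrite sandwE !ffunE.
case zi: (z i) => [j|] //=.
have [k xk] : exists k, pinv x j = Some k.
  by apply/pinv_pran/(subsetP ranz)/inranP; exists i.
have [l al] : exists l, pinv a k = Some l.
  by apply/pinv_pran/(subsetP domx); rewrite inE (pinvP xk).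
by rewrite ffunE xk /= al /= (pinvP al) /= (pinvP xk).
Qed.

Hypothesis inja : pinj a.

Lemma inS1rP x z : pinj x -> pran x \subset pdom a -> pinj z ->
  inS1r a x z <-> pdom z \subset pdom x.
Proof.
move=> injx ranx injz; split; first exact: inS1r_pdom.
move=> domz; right; exists (Defs.pcomp (pinv a) (Defs.pcomp (pinv x) z)); split.
  by apply: pinj_pcomp; [apply: pinj_pinv | apply: pinj_pcomp; first apply: pinj_pinv].
apply/ffunP => i; rewrite sandwE.
case xi: (x i) => [k|] /=; last first.
  by move: (subsetP domz i); rewrite !inE xi; case: (z i) => // ? /(_ isT).
have: k \in pdom a by apply/(subsetP ranx)/inranP; exists i.
rewrite inE; case ak: (a k) => [l|] //= _.
have [k' ak'] : exists k', pinv a l = Some k' by apply/pinv_pran/inranP; exists k.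
rewrite [RHS]ffunE ak' /= (inja (pinvP ak') ak).
have [i' xi'] : exists i', pinv x k = Some i' by apply/pinv_pran/inranP; exists i.
by rewrite [RHS]ffunE xi' /= (injx _ _ _ (pinvP xi') xi).
Qed.

End Divisibility.

Section GreenRelations.

Variables (n : nat) (a x y : ptmap n).
Hypotheses (injx : pinj x) (injy : pinj y).

Lemma greenL_inS1 : greenL a x y -> inS1l a x y /\ inS1l a y x.
Proof. by move=> Lxy; split; [apply/(Lxy y injy) | apply/(Lxy x injx)]; left. Qed.

Lemma greenR_inS1 : greenR a x y -> inS1r a x y /\ inS1r a y x.
Proof. by move=> Rxy; split; [apply/(Rxy y injy) | apply/(Rxy x injx)]; left. Qed.

Lemma greenL_pran : greenL a x y -> pran y = pran x.
Proof.
by case/greenL_inS1 => /inS1l_pran ranyx /inS1l_pran ranxy; apply/eqP; rewrite eqEsubset ranyx.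
Qed.

Lemma greenR_pdom : greenR a x y -> pdom y = pdom x.
Proof.
by case/greenR_inS1 => /inS1r_pdom domyx /inS1r_pdom domxy; apply/eqP; rewrite eqEsubset domyx.
Qed.

Lemma pran_greenL : pdom x \subset pran a -> pdom y \subset pran a ->
  pran y = pran x -> greenL a x y.
Proof.
move=> domx domy ranyx z injz.
split=> [/(inS1lP domx injz) | /(inS1lP domy injz)] sub.
  by apply/(inS1lP domy injz); rewrite ranyx.
by apply/(inS1lP domx injz); rewrite -ranyx.
Qed.

Lemma pdom_greenR : pinj a -> pran x \subset pdom a -> pran y \subset pdom a ->
  pdom y = pdom x -> greenR a x y.
Proof.
move=> inja ranx rany domyx z injz.
split=> [/(inS1rP inja injx ranx injz) | /(inS1rP inja injy rany injz)] sub.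
  by apply/(inS1rP inja injy rany injz); rewrite domyx.
by apply/(inS1rP inja injx ranx injz); rewrite -domyx.
Qed.

End GreenRelations.

Lemma pran_sub_pdom_of_fixed n (a x u : ptmap n) :
  x = sandw a x u -> pran x \subset pdom a.
Proof.
move=> xE; apply/subsetP => j /inranP[i xi]; move: (xi); rewrite {1}xE sandwE xi /=.
by case aj: (a j) => //= _; rewrite inE aj.
Qed.

Lemma pdom_sub_pran_of_fixed n (a x u : ptmap n) :
  pinj x -> x = sandw a u x -> pdom x \subset pran a.
Proof.
move=> injx xE; apply/subsetP => i; rewrite inE.
case xi: (x i) => [j|] // _; move: (xi); rewrite {1}xE sandwE.
case: (u i) => [k|] //=; case ak: (a k) => [l|] //= xl.
by rewrite -(injx _ _ _ xl xi); apply/inranP; exists k.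
Qed.

Lemma greenR_trivial n (a x y : ptmap n) : pinj x -> pinj y ->
  ~~ (pran x \subset pdom a) -> greenR a x y -> y = x.
Proof.
move=> injx injy ranx /greenR_inS1[] // [->|[t [_ yE]]] // [<-|[s [_ xE]]] //.
by case/negP: ranx; apply: (@pran_sub_pdom_of_fixed _ _ _ (sandw a t s)); rewrite -sandwA -yE.
Qed.

Lemma greenL_trivial n (a x y : ptmap n) : pinj x -> pinj y ->
  ~~ (pdom x \subset pran a) -> greenL a x y -> y = x.
Proof.
move=> injx injy domx /greenL_inS1[] // [->|[t [_ yE]]] // [<-|[s [_ xE]]] //.
by case/negP: domx; apply: (@pdom_sub_pran_of_fixed _ _ _ (sandw a s t)) => //; rewrite sandwA -yE.
Qed.

Theorem theorem4 (n : nat) (a x : ptmap n) :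
  0 < n -> pinj a -> pinj x ->
  ((pran x \subset pdom a) && (pdom x \subset pran a) ->
     forall y, inHclass a x y <-> (pinj y /\ pdom y = pdom x /\ pran y = pran x))
  /\
  (~~ ((pran x \subset pdom a) && (pdom x \subset pran a)) ->
     forall y, inHclass a x y <-> y = x).
Proof.
move=> _ inja injx; split=> [/andP[ranx domx] y | xa y]; split.
- case=> injy [Lxy Rxy]; split=> //.
  by split; [apply: greenR_pdom injx injy Rxy | apply: greenL_pran injx injy Lxy].
- case=> injy [domyx ranyx]; split=> //; split.
    by apply: pran_greenL => //; rewrite domyx.
  by apply: pdom_greenR => //; rewrite ranyx.
- case=> injy [Lxy Rxy]; case/nandP: xa => xa.
    exact: greenR_trivial xa Rxy.
  exact: greenL_trivial xa Lxy.
- by move=> ->; do 2!split=> //.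
Qed.
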